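(* (i) For integers $p\geq 0$, $s\geq 2$, $t\geq 1$ and $n=s+t+p+1$, the graph $M_{n,n}^{s,t;-}$ is $2p$-Hamilton-biconnected. (ii) For integers $p\geq 0$ and $n\geq p+6$, the graph $N_{n,n}^{p,2}$ is $2p$-Hamilton-biconnected.
   Context: A bipartite graph $G=(X,Y;E)$ is balanced if $|X|=|Y|$; it is Hamilton-biconnected if for every $u\in X$, $v\in Y$ there is a Hamiltonian path with ends $u,v$. A vertex set $W$ is balanced if $|W\cap X|=|W\cap Y|$; $G$ is $2p$-Hamilton-biconnected if for every balanced $W$ with $|W|=2p$, the subgraph induced by $V(G)\setminus W$ is Hamilton-biconnected. $M_{n,m}^{s,t;-}$: the bipartite graph with parts $X=X_1\cup\{x_0\}\cup X_3$, $Y=Y_1\cup\{y_0\}\cup Y_3$ (disjoint), $|X_1|=s-1$, $|X_3|=n-s$, $|Y_1|=m-t-1$, $|Y_3|=t$, whose edges are all pairs between $X_1$ and $Y_1$, the edge $x_0y_0$, all pairs between $X_3$ and $Y_3$, all pairs between $x_0$ and $Y_1$, and all pairs between $X_3$ and $Y_1\cup\{y_0\}$. $N_{n,n}^{p,2}$: the balanced bipartite graph with parts $X=X_1\cup X_2\cup X_3$, $Y=Y_1\cup Y_2\cup Y_3$, $|X_1|=|Y_1|=n-p-3$, $|X_2|=|Y_2|=p+2$, $|X_3|=|Y_3|=1$, whose edges are all pairs between $X_1$ and $Y_1$, between $X_2$ and $Y_2$, between $X_1$ and $Y_2$, between $X_2$ and $Y_1\cup Y_3$, and between $X_3$ and $Y_2$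 (there is no edge between $X_3$ and $Y_3$). *)

From mathcomp Require Import all_boot.
Set Implicit Arguments. Unset Strict Implicit. Unset Printing Implicit Defensive.

(* A bipartite graph G = (X, Y; E) is given by two finite part types X, Y and
   an edge predicate E : X -> Y -> bool.  Its vertex set is X + Y (disjoint sum). *)

Definition bedge (X Y : finType) (E : X -> Y -> bool) : rel (X + Y) :=
  fun a b => match a, b with
             | inl x, inr y => E x y
             | inr y, inl x => E x y
             | _, _ => false
             end.

Definition ham_path_in (X Y : finType) (E : X -> Y -> bool) (S : {set X + Y})
    (a b : X + Y) : Prop :=
  exists s : seq (X + Y),
    [/\ path (bedge E) a s, last a s = b, uniq (a :: s)
      & forall z, (z \in a :: s) = (z \in S)].

Definition ham_biconnected_in (X Y : finType) (E : X -> Y -> bool)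
    (S : {set X + Y}) : Prop :=
  forall (u : X) (v : Y), inl u \in S -> inr v \in S ->
    ham_path_in E S (inl u) (inr v).

Definition balanced (X Y : finType) (W : {set X + Y}) : Prop :=
  #|[set x : X | inl x \in W]| = #|[set y : Y | inr y \in W]|.

Definition ham_biconnected_2p (X Y : finType) (E : X -> Y -> bool) (p : nat) : Prop :=
  forall W : {set X + Y}, balanced W -> #|W| = 2 * p ->
    ham_biconnected_in E (~: W).

(* M_{n,m}^{s,t;-}.  X = 'I_n with X1 = {0..s-2}, x0 = s-1, X3 = {s..n-1};
   Y = 'I_m with Y1 = {0..m-t-2}, y0 = m-t-1, Y3 = {m-t..m-1}. *)
Definition M_adj (n m s t : nat) (x : 'I_n) (y : 'I_m) : bool :=
  let inX1 := x < s.-1 in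
  let isx0 := x == s.-1 :> nat in
  let inX3 := s <= x in
  let inY1 := y < m - t - 1 in
  let isy0 := y == m - t - 1 :> nat in
  let inY3 := m - t <= y in
  [|| inX1 && inY1, isx0 && isy0, inX3 && inY3, isx0 && inY1
    | inX3 && (inY1 || isy0)].

(* N_{n,n}^{p,2}.  X = Y = 'I_n with parts
   part 1 = {0..n-p-4} (size n-p-3), part 2 = {n-p-3..n-2} (size p+2),
   part 3 = {n-1} (size 1). *)
Definition N_adj (n p : nat) (x y : 'I_n) : bool :=
  let in1 (i : 'I_n) := i < n - p - 3 in
  let in2 (i : 'I_n) := (n - p - 3 <= i) && (i < n - 1) in
  let in3 (i : 'I_n) := i == n - 1 :> nat in
  [|| in1 x && in1 y, in2 x && in2 y, in1 x && in2 y,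
      in2 x && (in1 y || in3 y) | in3 x && in2 y].

Arguments M_adj : clear implicits.
Arguments N_adj : clear implicits.

From mathcomp Require Import all_boot zify.
Set Implicit Arguments. Unset Strict Implicit. Unset Printing Implicit Defensive.

(* Both graphs are threshold graphs with three levels: x ~ y iff lx x + ly y >= 2.
   In M, the X-classes X1, x0, X3 have levels 0, 1, 2 and Y1, y0, Y3 have levels
   2, 1, 0; in N, parts 1, 2, 3 have levels 1, 2, 0 on both sides.  In such a graph
   a Hamiltonian u-v path is built greedily, always stepping to an unused neighbour
   of least level.  The inequalities [feasible] between the numbers of unused
   vertices of each level survive one step (a finite case check) and force the last
   edge.  They hold at the start because, after deleting p vertices on each side,
   the level-0 vertices of either side are still fewer than the level-2 vertices of
   the other side. *)

Definition lpart (X Y : finType) (S : {set X + Y}) : {set X} := [set x | inl x \in S].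
Definition rpart (X Y : finType) (S : {set X + Y}) : {set Y} := [set y | inr y \in S].

Section SumSets.
Variables X Y : finType.
Implicit Types (S W : {set X + Y}) (x : X) (y : Y).

Lemma in_lpart S x : (x \in lpart S) = (inl x \in S). Proof. by rewrite inE. Qed.
Lemma in_rpart S y : (y \in rpart S) = (inr y \in S). Proof. by rewrite inE. Qed.

Lemma card_lpart_rpart S : #|S| = #|lpart S| + #|rpart S|.
Proof. by rewrite -sum1_card big_sumType !sum1dep_card. Qed.

Lemma lpartC S : lpart (~: S) = ~: lpart S.
Proof. by apply/setP => x; rewrite !inE. Qed.

Lemma rpartC S : rpart (~: S) = ~: rpart S.
Proof. by apply/setP => y; rewrite !inE. Qed.

Lemma lpartD2 S x y : lpart (S :\ inl x :\ inr y) = lpart S :\ x.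
Proof. by apply/setP => x'; rewrite !inE. Qed.

Lemma rpartD2 S x y : rpart (S :\ inl x :\ inr y) = rpart S :\ y.
Proof. by apply/setP => y'; rewrite !inE andbC. Qed.

Lemma card_compl_balanced W p : balanced W -> #|W| = 2 * p ->
  #|lpart (~: W)| = #|X| - p /\ #|rpart (~: W)| = #|Y| - p.
Proof.
have bal_eq : balanced W -> #|lpart W| = #|rpart W| by [].
move=> /bal_eq bal; rewrite card_lpart_rpart lpartC rpartC.
by have := cardsC (lpart W); have := cardsC (rpart W); lia.
Qed.

End SumSets.

Lemma set1_of_card1 (T : finType) (A : {set T}) u : u \in A -> #|A| = 1 -> A = [set u].
Proof. by move=> uA /eqP/cards1P[x Ax]; move: uA; rewrite Ax inE => /eqP->. Qed.

Section HamPath.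
Variables (X Y : finType) (E : X -> Y -> bool).
Implicit Types (S : {set X + Y}) (x u : X) (y v : Y).

Lemma ham_path_in_edge S u v :
  lpart S = [set u] -> rpart S = [set v] -> E u v -> ham_path_in E S (inl u) (inr v).
Proof.
move=> hl hr Euv; exists [:: inr v]; split=> //=; first by rewrite Euv.
by case=> [x|y]; rewrite !inE /= ?orbF -?in_lpart -?in_rpart ?hl ?hr inE.
Qed.

Lemma ham_path_in_cons2 S u y x b : inl u \in S -> inr y \in S -> E u y -> E x y ->
  ham_path_in E (S :\ inl u :\ inr y) (inl x) b -> ham_path_in E S (inl u) b.
Proof.
move=> uS yS Euy Exy [s [ps ls us ms]].
have [uN yN] : inl u \notin inl x :: s /\ inr y \notin inl x :: s.
  by rewrite !ms !inE !eqxx.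
exists [:: inr y, inl x & s]; split => //=; first by rewrite Euy Exy.
- by move: us uN => /= -> uN; rewrite yN in_cons uN andbT.
- move=> z; rewrite 2!in_cons ms !inE.
  by case: eqP => [->|_] //=; case: eqP => [->|_].
Qed.
End HamPath.

Definition level_count (T : finType) (A : {set T}) (lv : T -> nat) (z : nat) : nat :=
  #|[set x in A | lv x == z]|.

Definition drop_level (c : nat -> nat) (k z : nat) : nat := c z - (z == k).

Section LevelCount.
Variables (T : finType) (lv : T -> nat).
Implicit Types (A B : {set T}) (u : T).

Lemma card_level_count A : (forall x, lv x <= 2) ->
  #|A| = level_count A lv 0 + level_count A lv 1 + level_count A lv 2.
Proof.
move=> lv_le2; rewrite /level_count -!sum1dep_card -sum1_card.
rewrite !big_mkcondr -!big_split /=.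
by apply: eq_bigr => x _; move: (lv_le2 x); case: (lv x) => [|[|[|]]].
Qed.

Lemma level_count_gt0 A u : u \in A -> 0 < level_count A lv (lv u).
Proof. by move=> uA; apply/card_gt0P; exists u; rewrite !inE uA /=. Qed.

Lemma level_countS A B z : A \subset B -> level_count A lv z <= level_count B lv z.
Proof.
move=> sAB; apply/subset_leq_card/subsetP => x.
by rewrite !inE => /andP[/(subsetP sAB) -> ->].
Qed.

Lemma level_countD1 A u z : u \in A ->
  level_count (A :\ u) lv z = drop_level (level_count A lv) (lv u) z.
Proof.
move=> uA; rewrite /level_count /drop_level [in RHS](cardsD1 u) !inE uA eq_sym /=.
have -> : [set x in A :\ u | lv x == z] = [set x in A | lv x == z] :\ u.
  by apply/setP => x; rewrite !inE andbA.
by rewrite addKn.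
Qed.

Lemma level_count_other A u z : u \in A -> 0 < drop_level (level_count A lv) (lv u) z ->
  exists2 x, x \in A :\ u & lv x = z.
Proof.
move=> uA; rewrite -level_countD1 // => /card_gt0P[x].
by rewrite inE => /andP[xA /eqP lvx]; exists x.
Qed.

End LevelCount.

(* [a z] and [b z] count the unused X- and Y-vertices of level [z]; [i] and [j] are
   the levels of the ends in X and in Y of the path still to be built. *)
Definition feasible (a b : nat -> nat) (i j : nat) : Prop :=
  [/\ 0 < a 0 -> a 0 + (i != 0) <= b 2,
      0 < a 2 -> 0 < a 0 + a 1 -> b 0 + (i == 2) <= a 2,
      0 < b 0 -> b 0 + (j != 0) <= a 2
    & 0 < b 2 -> 0 < b 0 + b 1 -> a 0 + (j == 2) <= b 2].

Definition greedy_level (c : nat -> nat) (lo : nat) : nat :=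
  if (lo == 0) && (0 < c 0) then 0 else if (lo <= 1) && (0 < c 1) then 1 else 2.

Lemma feasible_eq a a' b b' i j :
  a =1 a' -> b =1 b' -> feasible a b i j -> feasible a' b' i j.
Proof. by move=> ea eb; rewrite /feasible !ea !eb. Qed.

Lemma feasible_of_lt a b i j : a 0 < b 2 -> b 0 < a 2 -> feasible a b i j.
Proof. by move=> ab ba; split=> *; lia. Qed.

Lemma feasible_edge a b i j : i <= 2 -> j <= 2 -> 0 < a i -> 0 < b j ->
  a 0 + a 1 + a 2 = 1 -> b 0 + b 1 + b 2 = 1 -> feasible a b i j -> 2 <= i + j.
Proof.
case: i => [|[|[|//]]] _; case: j => [|[|[|//]]] _ /= ai bj ha hb [] /=; lia.
Qed.

Lemma feasible_step a b i j : i <= 2 -> j <= 2 -> 0 < a i -> 0 < b j ->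
  a 0 + a 1 + a 2 = b 0 + b 1 + b 2 -> 2 <= a 0 + a 1 + a 2 -> feasible a b i j ->
  let l := greedy_level (drop_level b j) (2 - i) in
  let m := greedy_level (drop_level a i) (2 - l) in
  [/\ 2 <= i + l, 2 <= l + m, 0 < drop_level b j l, 0 < drop_level a i m
    & feasible (drop_level a i) (drop_level b l) m j].
Proof.
case: i => [|[|[|//]]] _; case: j => [|[|[|//]]] _ ai bj hab h2 [c1 c2 c3 c4];
rewrite /greedy_level /drop_level /feasible /=;
repeat (case: ifP => /= ?); repeat split; lia.
Qed.

Section ThresholdGraph.
Variables (X Y : finType) (E : X -> Y -> bool) (lx : X -> nat) (ly : Y -> nat).
Hypotheses (lx_le2 : forall x, lx x <= 2) (ly_le2 : forall y, ly y <= 2).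
Hypothesis E_levels : forall x y, E x y = (2 <= lx x + ly y).

Lemma threshold_ham_path S u v :
  #|lpart S| = #|rpart S| -> u \in lpart S -> v \in rpart S ->
  feasible (level_count (lpart S) lx) (level_count (rpart S) ly) (lx u) (ly v) ->
  ham_path_in E S (inl u) (inr v).
Proof.
move=> card_eq; move: {2}#|lpart S| (erefl #|lpart S|) card_eq => k.
elim: k S u v => [|k IH] S u v kS card_eq uS vS.
  by move: kS; rewrite (cardsD1 u) uS.
set a := level_count (lpart S) lx; set b := level_count (rpart S) ly => feas.
have suma : a 0 + a 1 + a 2 = k.+1 by rewrite -card_level_count.
have sumb : b 0 + b 1 + b 2 = k.+1 by rewrite -card_level_count // -card_eq.
have au := level_count_gt0 lx uS; have bv := level_count_gt0 ly vS.
case: k IH kS card_eq suma sumb => [|k] IH kS card_eq suma sumb.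
  apply: ham_path_in_edge; last by rewrite E_levels (feasible_edge _ _ au bv suma sumb).
  - exact: set1_of_card1.
  - by apply: set1_of_card1; rewrite // -card_eq.
have [] := feasible_step (lx_le2 u) (ly_le2 v) au bv (etrans suma (esym sumb)) _ feas.
  by rewrite suma.
set l := greedy_level _ _; set m := greedy_level _ _ => ul lm bl am feas'.
have [y yS ly_y] := level_count_other vS bl.
have [x xS lx_x] := level_count_other uS am.
move: yS xS => /setD1P[yv yS] /setD1P[xu xS].
apply: (ham_path_in_cons2 (y := y) (x := x)).
- by rewrite -in_lpart.
- by rewrite -in_rpart.
- by rewrite E_levels ly_y.
- by rewrite E_levels ly_y lx_x addnC.
apply: IH; rewrite ?lpartD2 ?rpartD2.
- by move: kS; rewrite (cardsD1 u) uS => -[].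
- by move: card_eq; rewrite (cardsD1 u) (cardsD1 y) uS yS => -[].
- exact/setD1P.
- by apply/setD1P; rewrite eq_sym.
- rewrite lx_x; apply: feasible_eq feas' => z; first by rewrite level_countD1.
  by rewrite level_countD1 // ly_y.
Qed.

Theorem threshold_ham_biconnected_2p p : #|X| = #|Y| ->
  level_count setT lx 0 + level_count setT ly 0 + level_count setT ly 1 + p < #|X| ->
  level_count setT ly 0 + level_count setT lx 0 + level_count setT lx 1 + p < #|X| ->
  ham_biconnected_2p E p.
Proof.
move=> card_XY lt_X0_Y2 lt_Y0_X2 W bal W2p u v uW vW.
have [cardl cardr] := card_compl_balanced bal W2p.
apply: threshold_ham_path; rewrite ?in_lpart ?in_rpart ?cardl ?cardr ?card_XY //.
have := card_level_count (lpart (~: W)) lx_le2.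
have := card_level_count (rpart (~: W)) ly_le2.
have := level_countS lx 0 (subsetT (lpart (~: W))).
have := level_countS lx 1 (subsetT (lpart (~: W))).
have := level_countS ly 0 (subsetT (rpart (~: W))).
have := level_countS ly 1 (subsetT (rpart (~: W))).
rewrite cardl cardr -card_XY => *; apply: feasible_of_lt; lia.
Qed.
End ThresholdGraph.

Lemma card_ord_range n (A : {set 'I_n}) a b :
  {in A, forall x : 'I_n, a <= x < b} -> #|A| <= b - a.
Proof.
move=> inA; rewrite cardE -(size_map val) -(size_iota a (b - a)).
apply: uniq_leq_size; first by rewrite (map_inj_uniq val_inj) enum_uniq.
by move=> z /mapP[x]; rewrite mem_enum => /inA ab ->; rewrite mem_iota /=; lia.
Qed.

Lemma level_count_ord_range n (lv : 'I_n -> nat) z a b :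
  (forall x : 'I_n, lv x = z -> a <= x < b) -> level_count setT lv z <= b - a.
Proof. by move=> h; apply: card_ord_range => x; rewrite !inE => /eqP/h. Qed.

Definition M_levelX (s x : nat) : nat :=
  if x < s.-1 then 0 else if x == s.-1 then 1 else 2.
Definition M_levelY (n t y : nat) : nat :=
  if y < n - t - 1 then 2 else if y == n - t - 1 then 1 else 0.
Definition N_level (n p x : nat) : nat :=
  if x < n - p - 3 then 1 else if x < n - 1 then 2 else 0.

Lemma M_adj_levels n s t (x y : 'I_n) : 0 < s ->
  M_adj n n s t x y = (2 <= M_levelX s x + M_levelY n t y).
Proof. by move=> s_gt0; rewrite /M_adj /M_levelX /M_levelY; repeat case: ifP; lia. Qed.

Lemma N_adj_levels n p (x y : 'I_n) : N_adj n p x y = (2 <= N_level n p x + N_level n p y).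
Proof.
have := ltn_ord x; have := ltn_ord y.
by rewrite /N_adj /N_level; repeat case: ifP; lia.
Qed.

Lemma M_ham_biconnected_2p p s t n : 0 < s -> n = s + t + p + 1 ->
  ham_biconnected_2p (M_adj n n s t) p.
Proof.
move=> s_gt0 n_def.
pose lx (x : 'I_n) := M_levelX s x; pose ly (y : 'I_n) := M_levelY n t y.
have lx0 : level_count setT lx 0 <= s.-1 - 0.
  by apply: level_count_ord_range => x; rewrite /lx /M_levelX; repeat case: ifP; lia.
have lx1 : level_count setT lx 1 <= s - s.-1.
  by apply: level_count_ord_range => x; rewrite /lx /M_levelX; repeat case: ifP; lia.
have ly0 : level_count setT ly 0 <= n - (n - t).
  apply: level_count_ord_range => y; have := ltn_ord y.
  by rewrite /ly /M_levelY; repeat case: ifP; lia.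
have ly1 : level_count setT ly 1 <= (n - t) - (n - t - 1).
  by apply: level_count_ord_range => y; rewrite /ly /M_levelY; repeat case: ifP; lia.
have lx_le2 x : lx x <= 2 by rewrite /lx /M_levelX; repeat case: ifP.
have ly_le2 y : ly y <= 2 by rewrite /ly /M_levelY; repeat case: ifP.
have := threshold_ham_biconnected_2p lx_le2 ly_le2 (fun x y => M_adj_levels t x y s_gt0).
by rewrite !card_ord; apply; lia.
Qed.

Lemma N_ham_biconnected_2p p n : p + 3 <= n -> ham_biconnected_2p (N_adj n p) p.
Proof.
move=> n_ge.
pose lv (x : 'I_n) := N_level n p x.
have lv0 : level_count setT lv 0 <= n - (n - 1).
  apply: level_count_ord_range => x; have := ltn_ord x.
  by rewrite /lv /N_level; repeat case: ifP; lia.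
have lv1 : level_count setT lv 1 <= n - p - 3 - 0.
  by apply: level_count_ord_range => x; rewrite /lv /N_level; repeat case: ifP; lia.
have lv_le2 x : lv x <= 2 by rewrite /lv /N_level; repeat case: ifP.
apply: (threshold_ham_biconnected_2p lv_le2 lv_le2 (@N_adj_levels n p)); rewrite card_ord; lia.
Qed.

Theorem lemma2p7 :
  (forall p s t n : nat, 2 <= s -> 1 <= t -> n = s + t + p + 1 ->
     ham_biconnected_2p (M_adj n n s t) p) /\
  (forall p n : nat, p + 6 <= n -> ham_biconnected_2p (N_adj n p) p).
Proof.
split=> [p s t n s_ge2 _ n_def | p n n_ge].
  by apply: M_ham_biconnected_2p n_def; lia.
by apply: N_ham_biconnected_2p; lia.
Qed.
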